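(* Write the Hilbert series of $R_{3,2}$ as $\frac{q(t)}{(1-t^2)(1-t^3)}$. Then $q(t)=1+t^4+t^5+t^6+t^8+t^9+t^{10}+\cdots$ (i.e., the coefficients of $t^0,\dots,t^{10}$ are $1,0,0,0,1,1,1,0,1,1,1$). Consequently $R_{3,2}$ is not Cohen--Macaulay.
   Context: $R_{3,2}$ is the subalgebra of $\mathbb{C}[x,y]$ generated by $P_i=3x^i+2y^i+(-3x-2y)^i$, $i\ge2$, graded by $\deg x=\deg y=1$. *)

From HB Require Import structures.
From mathcomp Require Import all_boot all_order all_algebra all_field.
From mathcomp Require Import mpoly.
Set Implicit Arguments. Unset Strict Implicit. Unset Printing Implicit Defensive.
Import Order.TTheory GRing.Theory Num.Theory.
Local Open Scope ring_scope.

Notation Cxy := {mpoly algC[2]}.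

Definition xv : Cxy := 'X_(ord0 : 'I_2).
Definition yv : Cxy := 'X_(ord_max : 'I_2).

Definition Pgen (i : nat) : Cxy :=
  3%:R * xv ^+ i + 2%:R * yv ^+ i + (- (3%:R * xv) - 2%:R * yv) ^+ i.

Inductive inR32 : Cxy -> Prop :=
  | inR32_gen i : (2 <= i)%N -> inR32 (Pgen i)
  | inR32_const (c : algC) : inR32 c%:MP
  | inR32_add p q : inR32 p -> inR32 q -> inR32 (p + q)
  | inR32_mul p q : inR32 p -> inR32 q -> inR32 (p * q).

Definition R32_deg (d : nat) (p : Cxy) : Prop := inR32 p /\ p \is d.-homog.

Definition lin_indep (n : nat) (v : 'I_n -> Cxy) : Prop :=
  forall c : 'I_n -> algC, \sum_(i < n) c i *: v i = 0 -> forall i, c i = 0.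

Definition has_dim (S : Cxy -> Prop) (n : nat) : Prop :=
  (exists v : 'I_n -> Cxy, (forall i, S (v i)) /\ lin_indep v) /\
  (forall v : 'I_n.+1 -> Cxy, (forall i, S (v i)) -> ~ lin_indep v).

(* Coefficient of t^n in  H(t) (1-t^2)(1-t^3) = H(t) (1 - t^2 - t^3 + t^5),
   where H(t) = \sum_d h d t^d. *)
Definition numer_coef (h : nat -> nat) (n : nat) : int :=
  let hh j := if (j <= n)%N then (h (n - j)%N)%:Z else 0%:Z in
  hh 0%N - hh 2%N - hh 3%N + hh 5%N.

Definition is_ideal (S I : Cxy -> Prop) : Prop :=
  (forall x, I x -> S x) /\ I 0 /\
  (forall x y, I x -> I y -> I (x + y)) /\
  (forall r x, S r -> I x -> I (r * x)).

Definition is_prime (S I : Cxy -> Prop) : Prop :=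
  is_ideal S I /\ ~ I 1 /\
  (forall a b, S a -> S b -> I (a * b) -> I a \/ I b).

Definition prime_chain (S : Cxy -> Prop) (n : nat) : Prop :=
  exists Pc : nat -> Cxy -> Prop,
    (forall i, (i <= n)%N -> is_prime S (Pc i)) /\
    (forall i, (i < n)%N ->
       (forall x, Pc i x -> Pc i.+1 x) /\ exists x, Pc i.+1 x /\ ~ Pc i x).

Definition krull_dim (S : Cxy -> Prop) (n : nat) : Prop :=
  prime_chain S n /\ ~ prime_chain S n.+1.

Definition in_gen_ideal (S : Cxy -> Prop) (k : nat) (f : nat -> Cxy) (x : Cxy)
  : Prop :=
  exists r : nat -> Cxy, (forall j, (j < k)%N -> S (r j)) /\
                         x = \sum_(j < k) f j * r j.

Definition irrelevant (S : Cxy -> Prop) (x : Cxy) : Prop :=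
  S x /\ x@_0%MM = 0.

Definition regular_seq (S : Cxy -> Prop) (k : nat) (f : nat -> Cxy) : Prop :=
  (forall i, (i < k)%N -> irrelevant S (f i)) /\
  (forall i, (i < k)%N -> forall r, S r ->
      in_gen_ideal S i f (f i * r) -> in_gen_ideal S i f r) /\
  ~ in_gen_ideal S k f 1.

(* Graded Cohen--Macaulay: depth of S_+ equals Krull dimension. *)
Definition cohen_macaulay (S : Cxy -> Prop) : Prop :=
  exists n, krull_dim S n /\ exists f, regular_seq S n f.

(* Each P_i is homogeneous of degree i, so the degree-d piece of R = R_{3,2} is
   spanned by the products P_s = P_{s_1} ... P_{s_k} over the partitions s of d
   into parts >= 2. Up to degree 10 explicit linear relations reduce these
   products to the bases listed in [basis_parts], whose linear independence is
   certified by evaluation at a few integer points in exact integer arithmetic.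
   This gives h(0), ..., h(10) = 1, 0, 1, 1, 2, 2, 4, 3, 6, 6, 8, and hence the
   first eleven coefficients of q(t) = H(t) (1 - t^2) (1 - t^3).

   For the second claim, u = x y (x - y)^3 (x + y)^2 is not in R (certified by
   evaluation in degree 7) although u R_+ is contained in R: this is checked on
   P_2, ..., P_6 by explicit identities, and it propagates to every P_i because
   x, y and -3x - 2y are roots of a sextic whose coefficients are, by Newton's
   identities, polynomials in P_2, ..., P_6. The chain of primes
   0 < {p : p(x, 0) = 0} < R_+ shows dim R >= 2, so a regular sequence contains
   f_0, f_1 in R_+; then f_1 (u f_0) = f_0 (u f_1) lies in f_0 R, hence so does
   u f_0, and u lies in R. *)

From Stdlib Require Import BinInt Classical ClassicalEpsilon.
From HB Require Import structures.
From mathcomp Require Import all_boot all_order all_algebra all_field.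
From mathcomp Require Import mpoly ssrZ ring zify.
Set Implicit Arguments. Unset Strict Implicit. Unset Printing Implicit Defensive.
Import Order.TTheory GRing.Theory Num.Theory.
Local Open Scope ring_scope.

(** * The subalgebra and the products of its generators *)

Lemma inR32_1 : inR32 1.
Proof. by rewrite -(rmorph1 (@mpolyC 2 algC)); apply: inR32_const. Qed.

Lemma inR32_0 : inR32 0.
Proof. by rewrite -(rmorph0 (@mpolyC 2 algC)); apply: inR32_const. Qed.

Lemma inR32_nat n : inR32 n%:R.
Proof. by rewrite -(rmorph_nat (@mpolyC 2 algC)); apply: inR32_const. Qed.

Lemma inR32_Z c p : inR32 p -> inR32 (c *: p).
Proof. by rewrite -mul_mpolyC; apply: inR32_mul; apply: inR32_const. Qed.

Lemma inR32_B p q : inR32 p -> inR32 q -> inR32 (p - q).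
Proof. by move=> hp hq; apply: inR32_add => //; rewrite -scaleN1r; apply: inR32_Z. Qed.

Lemma inR32_X p n : inR32 p -> inR32 (p ^+ n).
Proof.
by move=> hp; elim: n => [|n IH]; rewrite ?expr0 ?exprS; [apply: inR32_1 | apply: inR32_mul].
Qed.

Lemma inR32_sum (I : Type) (r : seq I) (P : pred I) (F : I -> Cxy) :
  (forall i, P i -> inR32 (F i)) -> inR32 (\sum_(i <- r | P i) F i).
Proof. by move=> hF; elim/big_ind: _ => //; [apply: inR32_0 | apply: inR32_add]. Qed.

Lemma inR32_unscale c p : c != 0 -> inR32 (c *: p) -> inR32 p.
Proof. by move=> c0 /(inR32_Z c^-1); rewrite scalerA mulVf ?scale1r. Qed.

Definition Pmon (s : seq nat) : Cxy := \prod_(i <- s) Pgen i.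

Lemma Pmon_cat s t : Pmon (s ++ t) = Pmon s * Pmon t.
Proof. exact: big_cat. Qed.

Lemma Pmon_perm s t : perm_eq s t -> Pmon s = Pmon t.
Proof. exact: perm_big. Qed.

Lemma inR32_Pmon s : all (leq 2) s -> inR32 (Pmon s).
Proof.
elim: s => [|i s IH] /=; first by rewrite /Pmon big_nil => _; apply: inR32_1.
by case/andP=> hi hs; rewrite /Pmon big_cons; apply: inR32_mul; [apply: inR32_gen | apply: IH].
Qed.

Lemma Pgen_homog i : Pgen i \is i.-homog.
Proof.
have homX (p : Cxy) : p \is 1.-homog -> p ^+ i \is i.-homog.
  by move=> hp; have := dhomogMn i hp; rewrite mul1n.
have hx : xv \is 1.-homog by rewrite dhomogX /= mdeg1.
have hy : yv \is 1.-homog by rewrite dhomogX /= mdeg1.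
by rewrite /Pgen !mulr_natl ?(rpredD, rpredB, rpredN, rpredMn, homX).
Qed.

Lemma Pmon_homog s : Pmon s \is (sumn s).-homog.
Proof.
elim: s => [|i s IH] /=; first by rewrite /Pmon big_nil dhomog1.
by rewrite /Pmon big_cons dhomogM ?Pgen_homog.
Qed.

Notation pih := (pihomog mdeg).

Section Homogeneous.
Variables (n : nat) (R : comNzRingType).
Implicit Types p q : {mpoly R[n]}.

Lemma pih_homog p d e : p \is e.-homog -> pih d p = if d == e then p else 0.
Proof.
move=> hp; case: eqP => [->|ne]; first exact: pihomog_dE.
by apply: (pihomog_ne0 (d := e)) => //; apply/eqP => E; apply: ne.
Qed.

Lemma pihM p q d :
  pih d (p * q) = \sum_(a < d.+1) pih a p * pih (d - a) q.
Proof.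
set K := (msize p + msize q + d).+1.
have hp : (msize p <= K)%N by rewrite /K; lia.
have hq : (msize q <= K)%N by rewrite /K; lia.
have hdK : (d < K)%N by rewrite /K; lia.
rewrite {1}(pihomog_partitionE hp) {1}(pihomog_partitionE hq) mulr_suml linear_sum /=.
rewrite (big_ord_widen_cond K xpredT (fun a => pih a p * pih (d - a) q) hdK).
rewrite [RHS]big_mkcond; apply: eq_bigr => a _; rewrite /= ltnS.
rewrite mulr_sumr linear_sum /= (eq_bigr (fun b : 'I_K =>
  if (a + b == d)%N then pih a p * pih b q else 0)); last first.
  by move=> b _; rewrite (@pih_homog _ _ (a + b)) ?dhomogM ?pihomogP // eq_sym.
case: leqP => [had|dla].
  have hb : (d - a < K)%N by apply: leq_ltn_trans (leq_subr _ _) _.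
  rewrite (bigD1 (Ordinal hb)) //= subnKC // eqxx big1 ?addr0 // => b /eqP nb.
  by case: eqP => // E; case: nb; apply: val_inj; rewrite /= -E addKn.
by rewrite big1 // => b _; case: eqP => // E; move: dla; rewrite -E ltnNge leq_addr.
Qed.

End Homogeneous.

(** * Spans and dimension *)

Section Span.
Variables (R : pzRingType) (V : lmodType R).
Implicit Types (B : seq V) (p q : V).

Definition in_span B q : Prop :=
  exists c : 'I_(size B) -> R, q = \sum_k c k *: B`_k.

Lemma in_span0 B : in_span B 0.
Proof. by exists (fun=> 0); rewrite big1 // => k _; rewrite scale0r. Qed.

Lemma in_spanD B p q : in_span B p -> in_span B q -> in_span B (p + q).
Proof.
move=> [a ->] [b ->]; exists (fun k => a k + b k).
by rewrite -big_split; apply: eq_bigr => k _; rewrite scalerDl.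
Qed.

Lemma in_spanZ B c q : in_span B q -> in_span B (c *: q).
Proof.
move=> [a ->]; exists (fun k => c * a k).
by rewrite scaler_sumr; apply: eq_bigr => k _; rewrite scalerA.
Qed.

Lemma in_span_sum B (I : Type) (r : seq I) (F : I -> V) :
  (forall i, in_span B (F i)) -> in_span B (\sum_(i <- r) F i).
Proof. by move=> hF; elim/big_ind: _ => //; [apply: in_span0 | apply: in_spanD]. Qed.

Lemma in_span_nth B k : (k < size B)%N -> in_span B B`_k.
Proof.
move=> hk; exists (fun j => (val j == k)%:R).
rewrite (bigD1 (Ordinal hk)) //= eqxx scale1r big1 ?addr0 // => j /eqP njk.
by rewrite (_ : val j == k = false) ?scale0r //; apply/eqP => E; apply: njk; apply: val_inj.
Qed.

Lemma in_span_mem B q : q \in B -> in_span B q.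
Proof. by move=> hq; rewrite -(nth_index 0 hq); apply: in_span_nth; rewrite index_mem. Qed.

Lemma in_span_trans B C q : {in B, forall b, in_span C b} -> in_span B q -> in_span C q.
Proof.
move=> hBC [c ->]; apply: in_span_sum => k; apply: in_spanZ.
by apply: hBC; apply: mem_nth.
Qed.

End Span.

Lemma in_spanM (R : pzRingType) (A : algType R) (B C E : seq A) p q :
  {in B & C, forall a b, in_span E (a * b)} ->
  in_span B p -> in_span C q -> in_span E (p * q).
Proof.
move=> hBC [a ->] [b ->]; rewrite mulr_suml; apply: in_span_sum => i.
rewrite mulr_sumr; apply: in_span_sum => j; rewrite -scalerAl -scalerAr.
by do 2 apply: in_spanZ; apply: hBC; apply: mem_nth.
Qed.

(* Nondecreasing partitions of [d] into parts [>= m]; [fuel] bounds the number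
   of parts. *)
Fixpoint sorted_parts (fuel d m : nat) : seq (seq nat) :=
  if d == 0%N then [:: [::]] else
  if fuel is f.+1 then
    flatten [seq [seq i :: s | s <- sorted_parts f (d - i) i] | i <- iota m (d.+1 - m)]
  else [::].

Definition partitions2 (d : nat) : seq (seq nat) := sorted_parts d d 2.

Lemma sorted_parts_sound fuel d m s :
  s \in sorted_parts fuel d m -> sumn s = d /\ all (leq m) s.
Proof.
elim: fuel d m s => [|f IH] d m s /=; case: eqP => [-> | _] //; rewrite ?inE.
- by move/eqP->.
- by move/eqP->.
case/flatten_mapP=> i; rewrite mem_iota => /andP[hmi hid] /mapP[t ht ->] /=.
have [st at'] := IH _ _ _ ht; rewrite st subnKC; last by lia.
split=> //=; rewrite hmi; apply/allP => j /(allP at'); exact: leq_trans.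
Qed.

Lemma sorted_parts_complete s fuel m : (0 < m)%N -> sorted leq s -> all (leq m) s ->
  (size s <= fuel)%N -> s \in sorted_parts fuel (sumn s) m.
Proof.
elim: s fuel m => [|i s IH] [|f] m hm //=; rewrite ?inE //.
move=> hsrt /andP[hmi hs] hsize.
have -> : (i + sumn s == 0)%N = false by apply/eqP; lia.
apply/flatten_mapP; exists i; first by rewrite mem_iota; lia.
rewrite addKn; apply: map_f; apply: IH => //; first exact: leq_trans hmi.
- exact: path_sorted hsrt.
- by apply/allP => j; apply: (allP (order_path_min leq_trans hsrt)).
Qed.

Lemma size_le_sumn s : all (leq 2) s -> (size s <= sumn s)%N.
Proof. by elim: s => //= i s IH /andP[hi /IH]; lia. Qed.

Lemma Pmon_in_span s : all (leq 2) s -> in_span (map Pmon (partitions2 (sumn s))) (Pmon s).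
Proof.
move=> hs; have ps : perm_eq (sort leq s) s by rewrite perm_sort.
have hs' : all (leq 2) (sort leq s) by rewrite (perm_all _ ps).
rewrite -(Pmon_perm ps) -(perm_sumn ps); apply/in_span_mem/map_f/sorted_parts_complete => //.
- exact: (sort_sorted leq_total).
- exact: size_le_sumn.
Qed.

Lemma pih_inR32_span p d : inR32 p -> in_span (map Pmon (partitions2 d)) (pih d p).
Proof.
move=> hp; elim: hp d => {p} [i hi | c | p q _ IHp _ IHq | p q _ IHp _ IHq] d.
- rewrite (pih_homog d (Pgen_homog i)); case: eqP => [->|_]; last exact: in_span0.
  by have := @Pmon_in_span [:: i]; rewrite /Pmon big_seq1 /= addn0 hi; apply.
- have hc : (c%:MP : Cxy) \is 0.-homog by rewrite -alg_mpolyC rpredZ ?dhomog1.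
  rewrite (pih_homog d hc); case: eqP => [->|_]; last exact: in_span0.
  rewrite -alg_mpolyC; apply: in_spanZ.
  by have := @Pmon_in_span [::]; rewrite /Pmon big_nil; apply.
- by rewrite pihomogD; apply: in_spanD.
rewrite pihM; apply: in_span_sum => a; apply: (in_spanM _ (IHp a) (IHq (d - a)%N)).
move=> _ _ /mapP[s hs ->] /mapP[t ht ->]; rewrite -Pmon_cat.
have [[ss sa] [st ta]] := (sorted_parts_sound hs, sorted_parts_sound ht).
have hda : (a <= d)%N by rewrite -ltnS.
by have := @Pmon_in_span (s ++ t); rewrite all_cat sa ta sumn_cat ss st subnKC //; apply.
Qed.

Lemma span_lin_dep B n (w : 'I_n -> Cxy) :
  (size B < n)%N -> (forall i, in_span B (w i)) -> ~ lin_indep w.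
Proof.
move=> hn /fin_all_exists[a ha] hind.
pose A : 'M[algC]_(n, size B) := \matrix_(i, k) a i k.
have : kermx A != 0.
  rewrite kermx_eq0 /row_free; apply: contraTneq (rank_leq_col A) => ->.
  by rewrite -ltnNge.
case/rowV0Pn=> v; rewrite sub_kermx => /eqP vA0; apply/negP; rewrite negbK.
have vA k : \sum_i v 0 i * a i k = 0.
  have := congr1 (fun M : 'rV_(size B) => M 0 k) vA0; rewrite !mxE => E.
  by rewrite -[RHS]E; apply: eq_bigr => j _; rewrite mxE.
apply/eqP/rowP => i; rewrite mxE; apply: (hind (v 0)).
under eq_bigr => j _ do rewrite ha scaler_sumr.
rewrite exchange_big big1 //= => k _.
by under eq_bigr => j _ do rewrite scalerA; rewrite -scaler_suml vA scale0r.
Qed.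

Lemma has_dim_exists (S : Cxy -> Prop) B :
  (forall q, S q -> in_span B q) -> exists n, has_dim S n.
Proof.
move=> hS.
pose indep_family n := exists v : 'I_n -> Cxy, (forall i, S (v i)) /\ lin_indep v.
have [m [hm hmax]] : exists m, indep_family m /\ ~ indep_family m.+1.
  apply: NNPP => hno.
  have hall n : indep_family n.
    elim: n => [|n IH]; first by exists (fun=> 0); split=> [[]|c _ []].
    by apply: NNPP => hn; apply: hno; exists n.
  have [v [hv hind]] := hall (size B).+1.
  exact: span_lin_dep (ltnSn _) (fun i => hS _ (hv i)) hind.
by exists m; split => // v hv hind; apply: hmax; exists v.
Qed.

Lemma lin_indep_widen m n (v : 'I_n -> Cxy) (hmn : (m <= n)%N) :
  lin_indep v -> lin_indep (fun i : 'I_m => v (widen_ord hmn i)).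
Proof.
move=> hv c hc i; pose c' (j : 'I_n) := if insub (val j) is Some k then c k else 0.
have c'K k : c' (widen_ord hmn k) = c k by rewrite /c' /= valK.
rewrite -c'K; apply: hv; rewrite -[RHS]hc.
rewrite (bigID (fun j : 'I_n => (j < m)%N)) /= [X in _ + X]big1 ?addr0 => [|j hj]; last first.
  by rewrite /c' insubF ?scale0r //; apply: negbTE.
by rewrite (big_ord_narrow hmn); apply: eq_bigr => j _; rewrite c'K.
Qed.

Lemma has_dim_unique (S : Cxy -> Prop) m n : has_dim S m -> has_dim S n -> m = n.
Proof.
have lt_dim a b : has_dim S a -> has_dim S b -> ~~ (a < b)%N.
  move=> [_ ha] [[v [hv hind]] _]; apply/negP => hab.
  exact: ha _ (fun i => hv _) (lin_indep_widen (hmn := hab) hind).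
move=> hm hn; apply/eqP; rewrite eqn_leq (leqNgt m n) (leqNgt n m).
by rewrite (lt_dim _ _ hm hn) (lt_dim _ _ hn hm).
Qed.

Lemma has_dim_basis (S : Cxy -> Prop) B :
  (forall k, (k < size B)%N -> S B`_k) -> lin_indep (fun k : 'I_(size B) => B`_k) ->
  (forall q, S q -> in_span B q) -> has_dim S (size B).
Proof.
move=> hB hind hspan; split; first by exists (fun k => B`_k); split=> // k; apply: hB.
by move=> w hw; apply: span_lin_dep (ltnSn _) (fun i => hspan _ (hw i)).
Qed.

(** * Exact evaluation at integer points *)

Definition zC : {rmorphism Z -> algC} := (intr \o int_of_Z)%FUN.

Lemma zC_eq0 z : (zC z == 0) = (z == 0).
Proof. by rewrite /= intr_eq0 -(inj_eq (can_inj int_of_ZK)). Qed.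

(* Large integer constants are written in [Z]: a numeral such as [311040] in
   [ring_scope] would elaborate through a unary [nat]. Rewriting [zC] of a
   binary literal with these equations gives an expression [ring] normalises. *)
Lemma zC_binary :
  [/\ zC Z0 = 0, forall p, zC (Zneg p) = - zC (Zpos p), zC (Zpos xH) = 1,
      forall p, zC (Zpos (xO p)) = 2 * zC (Zpos p) &
      forall p, zC (Zpos (xI p)) = 1 + 2 * zC (Zpos p)].
Proof.
split=> [|p||p|p]; first exact: (rmorph0 zC).
- exact: (rmorphN zC (Zpos p)).
- exact: (rmorph1 zC).
- by rewrite -(rmorph_nat zC 2) -rmorphM.
- by rewrite -(rmorph_nat zC 2) -(rmorph1 zC) -rmorphM -rmorphD.
Qed.

(* Keeps [/=] from unfolding [zC] before [zC_binary] can be used. *)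
Opaque zC.

Definition pt (a b : algC) : 'I_2 -> algC := fun i => if val i == 0%N then a else b.

Definition ptZ (p : Z * Z) : 'I_2 -> algC := pt (zC p.1) (zC p.2).

Definition PgenZ (i : nat) (p : Z * Z) : Z :=
  3%:R * p.1 ^+ i + 2%:R * p.2 ^+ i + (- (3%:R * p.1) - 2%:R * p.2) ^+ i.

Definition PmonZ (s : seq nat) (p : Z * Z) : Z := foldr (fun i r => PgenZ i p * r) 1 s.

Lemma mevalXn (v : 'I_2 -> algC) (p : Cxy) n : (p ^+ n).@[v] = p.@[v] ^+ n.
Proof. exact: rmorphXn. Qed.

Lemma Pgen_meval i (a b : algC) :
  (Pgen i).@[pt a b] = 3%:R * a ^+ i + 2%:R * b ^+ i + (- (3%:R * a) - 2%:R * b) ^+ i.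
Proof. by rewrite /Pgen !(mevalMn, meval1, mevalXU, mevalD, mevalN, mevalM, mevalXn). Qed.

Lemma Pgen_eval i p : (Pgen i).@[ptZ p] = zC (PgenZ i p).
Proof.
by rewrite Pgen_meval /PgenZ !(rmorphD, rmorphB, rmorphN, rmorphM, rmorphXn, rmorph_nat).
Qed.

Lemma Pmon_eval s p : (Pmon s).@[ptZ p] = zC (PmonZ s p).
Proof.
elim: s => [|i s IH]; first by rewrite /Pmon big_nil meval1 rmorph1.
by rewrite /Pmon big_cons mevalM -/(Pmon s) IH Pgen_eval -rmorphM.
Qed.

Definition dotZ (u v : seq Z) : Z := foldr (fun uv r => uv.1 * uv.2 + r) 0 (zip u v).

Lemma dotZ_sum u v : size u = size v -> dotZ u v = \sum_(j < size u) u`_j * v`_j.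
Proof.
elim: u v => [|x u IH] [|y v] //=; first by rewrite big_ord0.
by case=> hs; rewrite big_ord_recl /dotZ /= -/(dotZ u v) IH.
Qed.

Definition evalsZ (P : seq (Z * Z)) (s : seq nat) : seq Z := [seq PmonZ s p | p <- P].

Lemma size_evalsZ P s : size (evalsZ P s) = size P.
Proof. exact: size_map. Qed.

(* Row [k] of [L] combines the evaluations at the points [P] into a functional
   that is nonzero on [Pmon B`_k] and vanishes on the other [Pmon B`_l]; it
   forces the [k]-th coefficient of any vanishing combination to be zero. *)
Definition indep_certificate (P : seq (Z * Z)) (L : seq (seq Z)) (B : seq (seq nat)) :=
  all (fun k => (size (nth [::] L k) == size P) &&
         all (fun l => (dotZ (nth [::] L k) (evalsZ P (nth [::] B l)) != 0) == (k == l))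
           (iota 0 (size B)))
      (iota 0 (size B)).

Lemma dotZ_comb P (lam : seq Z) B (c : 'I_(size (map Pmon B)) -> algC) :
  size lam = size P ->
  \sum_l c l * zC (dotZ lam (evalsZ P (nth [::] B l))) =
  \sum_(j < size P) zC lam`_j * (\sum_l c l *: (map Pmon B)`_l).@[ptZ P`_j].
Proof.
move=> hlam; under eq_bigr => l _.
  rewrite dotZ_sum ?size_evalsZ // rmorph_sum hlam mulr_sumr.
  under eq_bigr => j _ do rewrite rmorphM mulrCA.
  over.
rewrite exchange_big; apply: eq_bigr => j _; rewrite -mulr_sumr rmorph_sum; congr (_ * _).
apply: eq_bigr => l _; have hl : (l < size B)%N by rewrite -(size_map Pmon).
by rewrite /= mevalZ (nth_map [::] _ _ hl) (nth_map (0, 0) _ _ (ltn_ord j)) Pmon_eval.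
Qed.

Lemma lin_indep_certificate P L B : indep_certificate P L B ->
  lin_indep (fun k : 'I_(size (map Pmon B)) => (map Pmon B)`_k).
Proof.
move=> /allP cert c hc k; set Lk := nth [::] L k.
have hk : (k < size B)%N by rewrite -(size_map Pmon).
have kB : (k : nat) \in iota 0 (size B) by rewrite mem_iota.
have /andP[/eqP hLk /allP hrow] := cert _ kB.
have := dotZ_comb c hLk; rewrite hc [X in _ = X]big1 => [|j _]; last by rewrite rmorph0 mulr0.
have dot_neq0 (l : 'I_(size (map Pmon B))) :
    (dotZ Lk (evalsZ P (nth [::] B l)) != 0) = (k == l).
  have hl : (l < size B)%N by rewrite -(size_map Pmon).
  have lB : (l : nat) \in iota 0 (size B) by rewrite mem_iota add0n hl.
  by rewrite (eqP (hrow _ lB)).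
rewrite (bigD1 k) //= big1 ?addr0 => [/eqP|l /negbTE hlk]; last first.
  by move: (dot_neq0 l); rewrite [k == l]eq_sym hlk => /negbFE/eqP->; rewrite rmorph0 mulr0.
by rewrite mulf_eq0 zC_eq0 -[_ == 0]negbK dot_neq0 eqxx orbF => /eqP.
Qed.

(* [lam] combines the evaluations at [P] into a functional vanishing on every
   [Pmon s] with [s \in B] but not on a polynomial whose values are [qv]. *)
Definition nonmember_certificate (P : seq (Z * Z)) (lam : seq Z) (B : seq (seq nat))
    (qv : seq Z) :=
  [&& size lam == size P, all (fun s => dotZ lam (evalsZ P s) == 0) B & dotZ lam qv != 0].

Lemma not_in_span_certificate P lam B q qv : nonmember_certificate P lam B qv ->
  size qv = size P -> (forall j, (j < size P)%N -> q.@[ptZ P`_j] = zC qv`_j) ->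
  ~ in_span (map Pmon B) q.
Proof.
case/and3P=> /eqP hlam /allP hB hq hqv qvE [c qE]; move: hq; apply/negP; rewrite negbK.
have := dotZ_comb c hlam; rewrite -qE big1 => [|l _]; last first.
  by rewrite (eqP (hB _ (mem_nth [::] _))) ?rmorph0 ?mulr0 // -(size_map Pmon).
move=> E; rewrite -zC_eq0 dotZ_sum ?hqv // rmorph_sum hlam [X in _ == X]E.
by apply/eqP/eq_bigr => j _; rewrite rmorphM qvE.
Qed.

(** * The Hilbert function up to degree 10 *)

Definition basis_parts (d : nat) : seq (seq nat) :=
  match d with
  | 0 => [:: [::]]
  | 2 => [:: [:: 2]]
  | 3 => [:: [:: 3]]
  | 4 => [:: [:: 2; 2]; [:: 4]]
  | 5 => [:: [:: 2; 3]; [:: 5]]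
  | 6 => [:: [:: 2; 2; 2]; [:: 2; 4]; [:: 3; 3]; [:: 6]]
  | 7 => [:: [:: 2; 2; 3]; [:: 2; 5]; [:: 3; 4]]
  | 8 => [:: [:: 2; 2; 2; 2]; [:: 2; 2; 4]; [:: 2; 3; 3]; [:: 2; 6]; [:: 3; 5]; [:: 4; 4]]
  | 9 => [:: [:: 2; 2; 2; 3]; [:: 2; 2; 5]; [:: 2; 3; 4]; [:: 3; 3; 3]; [:: 3; 6]; [:: 4; 5]]
  | 10 => [:: [:: 2; 2; 2; 2; 2]; [:: 2; 2; 2; 4]; [:: 2; 2; 3; 3]; [:: 2; 2; 6];
             [:: 2; 3; 5]; [:: 2; 4; 4]; [:: 3; 3; 4]; [:: 4; 6]]
  | _ => [::]
  end.

Definition basis (d : nat) : seq Cxy := map Pmon (basis_parts d).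

(* [(s, D, c)] stands for the identity [D * Pmon s = \sum_k c`_k * (basis d)`_k]. *)
Local Open Scope Z_scope.
Definition basis_relations (d : nat) : seq (seq nat * Z * seq Z) :=
  match d with
  | 7%N => [:: ([:: 7]%N, 120, [:: -35; 84; 70])]
  | 8%N => [:: ([:: 8]%N, 720, [:: 15; -180; -160; 480; 384; 180])]
  | 9%N => [:: ([:: 2; 7]%N, 120, [:: -35; 84; 70; 0; 0; 0]);
               ([:: 9]%N, 360, [:: -45; 81; 0; -20; 180; 162])]
  | 10%N => [:: ([:: 2; 8]%N, 720, [:: 15; -180; -160; 480; 384; 180; 0; 0]);
                ([:: 3; 7]%N, 120, [:: 0; 0; -35; 0; 84; 0; 70; 0]);
                ([:: 5; 5]%N, 1440, [:: -5; 80; -320; -120; 1344; -300; 0; 720]);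
                ([:: 10]%N, 3600, [:: 35; -335; -910; 690; 1872; -150; 500; 1860])]
  | _ => [::]
  end.
Local Close Scope Z_scope.

Lemma partitions2_covered :
  all (fun d => all (fun s => (s \in basis_parts d) ||
                              (s \in [seq r.1.1 | r <- basis_relations d]))
                    (partitions2 d))
      (iota 0 11).
Proof. by vm_compute. Qed.

Lemma span_of_relation (V : lmodType algC) (B : seq V) q (D : Z) (c : seq Z) : D != 0 ->
  zC D *: q = \sum_(k < size B) zC c`_k *: B`_k -> in_span B q.
Proof.
move=> D0 hq; exists (fun k => (zC D)^-1 * zC c`_k).
have -> : q = (zC D)^-1 *: (zC D *: q) by rewrite scalerA mulVf ?scale1r ?zC_eq0.
by rewrite hq scaler_sumr; apply: eq_bigr => k _; rewrite scalerA.
Qed.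

Lemma basis_relations_span d r : r \in basis_relations d -> in_span (basis d) (Pmon r.1.1).
Proof.
move=> hr; apply: (span_of_relation (D := r.1.2) (c := r.2)); move: hr.
all: case: d => [|[|[|[|[|[|[|[|[|[|[|d]]]]]]]]]]] //=; rewrite !inE.
all: repeat case/orP=> [|]; move/eqP=> -> //=.
all: have [z0 zN z1 zO zI] := zC_binary.
all: rewrite /basis /= !big_ord_recr big_ord0 /= /Pmon !big_cons !big_nil /Pgen.
all: rewrite -!mul_mpolyC !(z0, zN, z1, zO, zI); ring.
Qed.

Lemma basis_parts_homog d : all (fun s => (sumn s == d) && all (leq 2) s) (basis_parts d).
Proof. by do 11 case: d => [|d] //. Qed.

Lemma R32_deg_in_span d q : R32_deg d q -> in_span (map Pmon (partitions2 d)) q.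
Proof. by move=> [hq hqd]; rewrite -(pihomog_dE hqd); apply: pih_inR32_span. Qed.

Lemma basis_spans d q : (d <= 10)%N -> R32_deg d q -> in_span (basis d) q.
Proof.
move=> hd /R32_deg_in_span; apply: in_span_trans => _ /mapP[s hs ->].
have /allP/(_ d) := partitions2_covered.
rewrite mem_iota ltnS hd => /(_ isT)/allP/(_ s hs)/orP[hb | /mapP[r hr ->]].
  exact/in_span_mem/map_f.
exact: basis_relations_span.
Qed.

Local Open Scope Z_scope.
Definition basis_certificate (d : nat) : seq (Z * Z) * seq (seq Z) :=
  match d with
  | 0%N => ([:: (1, 0)],
         [:: [:: 1]])
  | 2%N => ([:: (1, 0)],
         [:: [:: 1]])
  | 3%N => ([:: (1, 0)],
         [:: [:: 1]])
  | 4%N => ([:: (1, 0); (0, 1)],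
         [:: [:: -3; 14];
          [:: 1; -4]])
  | 5%N => ([:: (1, 0); (1, 1)],
         [:: [:: -13; 1];
          [:: 25; -2]])
  | 6%N => ([:: (1, 0); (0, 1); (1, 1); (1, -1)],
         [:: [:: -560; 2160; 17; 275];
          [:: 760; -2960; -23; -245];
          [:: 240; -1000; -7; -45];
          [:: -100; 400; 3; 25]])
  | 7%N => ([:: (1, 0); (0, 1); (1, 1)],
         [:: [:: -135; 1120; 2];
          [:: 75; -700; -1];
          [:: -1; 16; 0]])
  | 8%N => ([:: (1, 0); (0, 1); (1, 1); (1, -1); (1, 2); (2, 1)],
         [:: [:: 158940; -716940; 16281; -4025; 1600; -980];
          [:: -623160; 2819340; -63909; 48885; -6320; 3860];
          [:: -169830; 633780; -17667; 35595; -1490; 980];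
          [:: 11907; -50301; 1215; -1755; 113; -71];
          [:: 154575; -514350; 16173; -40125; 1225; -850];
          [:: -45900; 168750; -4617; 11025; -370; 250]])
  | 9%N => ([:: (1, 0); (0, 1); (1, 1); (1, 2); (2, 1); (1, -2)],
         [:: [:: -64125; 368550; -4350; -275; 154; -483];
          [:: 10800; -172800; 1880; 225; -96; 3817];
          [:: 53325; -268650; 3510; 200; -118; -864];
          [:: 10800; -81000; 632; 45; -24; -227];
          [:: -6750; 47250; -390; -25; 14; 147];
          [:: 675; -10800; -4; 0; 0; -50]])
  | 10%N => ([:: (1, 0); (0, 1); (1, 1); (1, -1); (1, 2); (2, 1); (1, -2); (2, -1)],
         [:: [:: 2454300; 0; 74528; 6501600; 765; -1008; -12733; -6160];
          [:: -866700; -1328400; -25252; -2335500; -45; 288; 4013; 2480];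
          [:: 461700; -2419200; 16672; 252000; 615; -336; 9289; -560];
          [:: 148500; -86400; 4592; 286800; 55; -64; -1239; -320];
          [:: -818100; 2251800; -28264; -905400; -735; 492; -6433; 1340];
          [:: 137700; 7646400; -2320; 2062800; -1245; 336; 4061; -2320];
          [:: 8100; 64800; 208; 25200; -9; 0; 25; -32];
          [:: -2700; -302400; 208; -70800; 55; -16; 9; 80]])
  | _ => ([::], [::])
  end.
Local Close Scope Z_scope.

Lemma basis_certified :
  all (fun d => indep_certificate (basis_certificate d).1 (basis_certificate d).2 (basis_parts d))
      (iota 0 11).
Proof. by vm_compute. Qed.

Lemma basis_lin_indep d : (d <= 10)%N -> lin_indep (fun k : 'I_(size (basis d)) => (basis d)`_k).
Proof.
move=> hd; apply: (lin_indep_certificate (P := (basis_certificate d).1)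
                                        (L := (basis_certificate d).2)).
by apply: (allP basis_certified); rewrite mem_iota.
Qed.

Lemma has_dim_R32_deg d : (d <= 10)%N -> has_dim (R32_deg d) (size (basis_parts d)).
Proof.
move=> hd; rewrite -(size_map Pmon); apply: has_dim_basis (basis_lin_indep hd) _ => [k|q].
  rewrite size_map => hk; rewrite (nth_map [::] _ _ hk).
  have /andP[/eqP hs h2] := allP (basis_parts_homog d) _ (mem_nth [::] hk).
  by split; [apply: inR32_Pmon | rewrite -[X in X.-homog]hs Pmon_homog].
exact: basis_spans.
Qed.

(** * Failure of the Cohen-Macaulay property *)

Definition R32_kernel (D : pzRingType) (f : Cxy -> D) (p : Cxy) : Prop := inR32 p /\ f p = 0.

Lemma R32_kernel_prime (D : idomainType) (f : {rmorphism Cxy -> D}) :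
  is_prime inR32 (R32_kernel f).
Proof.
split; [split; [|split; [|split]] | split].
- by move=> x [].
- by split; [apply: inR32_0 | apply: rmorph0].
- by move=> x y [hx fx] [hy fy]; split; [apply: inR32_add | rewrite rmorphD fx fy addr0].
- by move=> r x hr [hx fx]; split; [apply: inR32_mul | rewrite rmorphM fx mulr0].
- by case=> _ /eqP; rewrite rmorph1 oner_eq0.
- move=> a b ha hb [_ /eqP]; rewrite rmorphM mulf_eq0 => /orP[] /eqP fab.
  + by left.
  + by right.
Qed.

Definition subst_y0 : {rmorphism Cxy -> {poly algC}} :=
  mmap (@polyC algC) (fun i : 'I_2 => if val i == 0%N then 'X else 0).

Lemma Pgen_coef0 i : (1 < i)%N -> (Pgen i)@_0 = 0.
Proof.
by move=> hi; apply: (dhomog_nemf_coeff (Pgen_homog i)); rewrite /= mdeg0; case: i hi.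
Qed.

Lemma subst_y0_Pgen i :
  subst_y0 (Pgen i) = 3%:R * 'X ^+ i + 2%:R * 0 ^+ i + (- (3%:R * 'X)) ^+ i.
Proof.
have [hx hy] : subst_y0 xv = 'X /\ subst_y0 yv = 0 by rewrite /= !mmapX !mmap1U.
by rewrite /Pgen !(rmorph_nat, rmorphD, rmorphB, rmorphN, rmorphM, rmorphXn) hx hy mulr0 subr0.
Qed.

Lemma subst_y0_coef0 p : inR32 p -> (subst_y0 p)`_0 = p@_0.
Proof.
elim=> {p} [i hi | c | p q _ IHp _ IHq | p q _ IHp _ IHq].
- rewrite Pgen_coef0 // -horner_coef0 subst_y0_Pgen !hornerE !expr0n.
  by case: i hi => [|i] //= _; rewrite !(mulr0, addr0, oppr0, exprS, mul0r).
- by rewrite /= mmapC coefC mcoeffC eqxx mulr1.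
- by rewrite rmorphD coefD mcoeffD IHp IHq.
- by rewrite rmorphM coef0M IHp IHq (rmorphM (mcoeff 0)).
Qed.

Lemma R32_prime_chain2 : prime_chain inR32 2.
Proof.
pose Pc i := if i == 0%N then R32_kernel idfun
             else if i == 1%N then R32_kernel subst_y0 else irrelevant inR32.
exists Pc; split.
  case=> [|[|i]] _; rewrite /Pc /=; apply: R32_kernel_prime.
case=> [|[|i]] // _; split.
- by move=> p [hp /= ->]; split; [apply: inR32_0 | apply: rmorph0].
- pose w := Pgen 2 ^+ 3 - 3%:R * Pgen 3 ^+ 2.
  have hw : inR32 w.
    apply: inR32_B; first by apply: inR32_X; apply: inR32_gen.
    by apply: inR32_mul; [apply: inR32_nat | apply: inR32_X; apply: inR32_gen].
  exists w; split.
    by split=> //=; rewrite !(rmorph_nat, rmorphXn, rmorphB, rmorphM) !subst_y0_Pgen; ring.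
  move=> [_ /= w0]; have := congr1 (meval (pt 0 1)) w0.
  rewrite meval0 /w !(mevalXn, mevalB, mevalM, mevalMn, meval1) !Pgen_meval.
  rewrite (_ : _ - _ = 108%:R); last by ring.
  by move/eqP; rewrite pnatr_eq0.
- by move=> p [hp hp0]; split=> //; rewrite /= -(subst_y0_coef0 hp) hp0 coef0.
exists (Pgen 2); split; first by split; [apply: inR32_gen | apply: Pgen_coef0].
move=> [_ h0]; have : subst_y0 (Pgen 2) = 'X^2 *+ 12 by rewrite subst_y0_Pgen; ring.
rewrite h0 => /(congr1 (fun p : {poly algC} => p`_2)).
by rewrite coef0 coefMn coefXn eqxx => /eqP; rewrite eq_sym pnatr_eq0.
Qed.

Definition u7 : Cxy := xv * yv * (xv - yv) ^+ 3 * (xv + yv) ^+ 2.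

Lemma inR32_of_relation q (D : Z) (t : seq (Z * seq nat)) :
  D != 0 -> all (fun x => all (leq 2) x.2) t ->
  (zC D)%:MP * q = \sum_(x <- t) (zC x.1)%:MP * Pmon x.2 -> inR32 q.
Proof.
move=> D0 /allP ht hq; apply: (@inR32_unscale (zC D)); first by rewrite zC_eq0.
rewrite -mul_mpolyC hq big_seq; apply: inR32_sum => x /ht hx.
by apply: inR32_mul; [apply: inR32_const | apply: inR32_Pmon].
Qed.

(* [(D, t)] stands for the identity [D * u7 * Pgen i = \sum_(x <- t) x.1 * Pmon x.2]. *)
Local Open Scope Z_scope.
Definition u7_relation (i : nat) : Z * seq (Z * seq nat) :=
  match i with
  | 2%N => (1440, [:: (85, [:: 2; 2; 2; 3]%N); (-176, [:: 2; 2; 5]%N); (110, [:: 2; 3; 4]%N);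
                  (100, [:: 3; 3; 3]%N); (-360, [:: 3; 6]%N); (240, [:: 4; 5]%N)])
  | 3%N => (10368, [:: (-23, [:: 2; 2; 2; 2; 2]%N); (336, [:: 2; 2; 2; 4]%N);
                   (1044, [:: 2; 2; 3; 3]%N); (-360, [:: 2; 2; 6]%N); (-1440, [:: 2; 3; 5]%N);
                   (-1188, [:: 2; 4; 4]%N); (-504, [:: 3; 3; 4]%N); (2160, [:: 4; 6]%N)])
  | 4%N => (25920, [:: (35, [:: 2; 2; 2; 2; 3]%N); (-228, [:: 2; 2; 2; 5]%N);
                   (1530, [:: 2; 2; 3; 4]%N); (780, [:: 2; 3; 3; 3]%N); (-1800, [:: 2; 3; 6]%N);
                   (-1080, [:: 2; 4; 5]%N); (-720, [:: 3; 3; 5]%N); (1440, [:: 3; 4; 4]%N)])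
  | 5%N => (15552, [:: (-25, [:: 2; 2; 2; 2; 2; 2]%N); (360, [:: 2; 2; 2; 2; 4]%N);
                   (930, [:: 2; 2; 2; 3; 3]%N); (-360, [:: 2; 2; 2; 6]%N);
                   (-1008, [:: 2; 2; 3; 5]%N); (-1260, [:: 2; 2; 4; 4]%N);
                   (-1440, [:: 2; 3; 3; 4]%N); (2160, [:: 2; 4; 6]%N); (-360, [:: 3; 3; 3; 3]%N);
                   (1080, [:: 3; 3; 6]%N)])
  | 6%N => (311040, [:: (-1055, [:: 2; 2; 2; 2; 2; 3]%N); (924, [:: 2; 2; 2; 2; 5]%N);
                    (11940, [:: 2; 2; 2; 3; 4]%N); (11220, [:: 2; 2; 3; 3; 3]%N);
                    (-6840, [:: 2; 2; 3; 6]%N); (-10440, [:: 2; 2; 4; 5]%N);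
                    (-16560, [:: 2; 3; 3; 5]%N); (-12060, [:: 2; 3; 4; 4]%N);
                    (-9000, [:: 3; 3; 3; 4]%N); (32400, [:: 3; 4; 6]%N)])
  | _ => (0, [::])
  end.
Local Close Scope Z_scope.

Lemma u7_Pgen_small i : (2 <= i <= 6)%N -> inR32 (u7 * Pgen i).
Proof.
move=> hi; apply: (inR32_of_relation (D := (u7_relation i).1) (t := (u7_relation i).2)).
all: move: hi; case: i => [|[|[|[|[|[|[|i]]]]]]] //= _.
all: have [z0 zN z1 zO zI] := zC_binary.
all: rewrite !big_cons big_nil /Pmon !big_cons !big_nil /u7 /Pgen !(z0, zN, z1, zO, zI); ring.
Qed.


(* [720 (-1)^(k+1) e_k], where [e_k] is the k-th elementary symmetric function of
   the multiset {x, x, x, y, y, -3x - 2y}, written through Newton's identities in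
   its power sums, which are the [Pgen i] (with [Pgen 1 = 0]). *)
Definition sextic_coef (k : nat) : Cxy :=
  match k with
  | 2 => 360%:R * Pmon [:: 2]
  | 3 => 240%:R * Pmon [:: 3]
  | 4 => 180%:R * Pmon [:: 4] - 90%:R * Pmon [:: 2; 2]
  | 5 => 144%:R * Pmon [:: 5] - 120%:R * Pmon [:: 2; 3]
  | 6 => 15%:R * Pmon [:: 2; 2; 2] - 90%:R * Pmon [:: 2; 4] - 40%:R * Pmon [:: 3; 3]
         + 120%:R * Pmon [:: 6]
  | _ => 0
  end.

Lemma inR32_sextic_coef k : inR32 (sextic_coef k).
Proof.
case: k => [|[|[|[|[|[|[|k]]]]]]] /=; try exact: inR32_0.
all: repeat first [ exact: inR32_nat | by apply: inR32_Pmon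
                  | apply: inR32_B | apply: inR32_add | apply: inR32_mul ].
Qed.

Lemma big_nat_2_7 (F : nat -> Cxy) :
  \sum_(2 <= j < 7) F j = F 2%N + F 3%N + F 4%N + F 5%N + F 6%N.
Proof. by rewrite unlock /= addr0 !addrA. Qed.

Lemma sextic_root t : t \in [:: xv; yv; - (3%:R * xv) - 2%:R * yv] ->
  720%:R * t ^+ 6 = \sum_(2 <= k < 7) sextic_coef k * t ^+ (6 - k).
Proof.
rewrite big_nat_2_7 !inE.
by case/or3P=> /eqP->; rewrite /sextic_coef /Pmon !big_cons !big_nil /Pgen; ring.
Qed.

Lemma Pgen_recurrence k :
  720%:R * Pgen (k + 6) = \sum_(2 <= j < 7) sextic_coef j * Pgen (k + (6 - j)).
Proof.
have root t := sextic_root (t := t).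
rewrite /Pgen; set z := - (3%:R * xv) - 2%:R * yv.
rewrite exprD [yv ^+ _]exprD [z ^+ _]exprD.
have -> : forall a b c : Cxy, 720%:R * (3%:R * (xv ^+ k * a) + 2%:R * (yv ^+ k * b) + z ^+ k * c)
    = 3%:R * xv ^+ k * (720%:R * a) + 2%:R * yv ^+ k * (720%:R * b) + z ^+ k * (720%:R * c).
  by move=> a b c; ring.
rewrite !root ?inE ?eqxx ?orbT //.
by rewrite !big_nat_2_7 !exprD; ring.
Qed.

Lemma u7_Pgen i : (0 < i)%N -> inR32 (u7 * Pgen i).
Proof.
elim/ltn_ind: i => i IH hi; case: (ltnP i 7) => hi7.
  case: (ltnP i 2) => hi2; last by apply: u7_Pgen_small; rewrite hi2 -ltnS.
  have -> : i = 1%N by lia.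
  by rewrite (_ : Pgen 1 = 0) ?mulr0; [apply: inR32_0 | rewrite /Pgen; ring].
have -> : i = ((i - 6) + 6)%N by lia.
apply: (@inR32_unscale 720%:R); first by rewrite pnatr_eq0.
rewrite scaler_nat -mulr_natl mulrCA Pgen_recurrence mulr_sumr big_nat.
apply: inR32_sum => j /andP[hj2 hj7]; rewrite mulrCA; apply: inR32_mul.
  exact: inR32_sextic_coef.
by apply: IH; lia.
Qed.

Lemma u7_mul_irrelevant p : inR32 p -> inR32 (u7 * (p - (p@_0)%:MP)).
Proof.
elim=> {p} [i hi | c | p q hp IHp hq IHq | p q hp IHp hq IHq].
- by rewrite Pgen_coef0 // subr0; apply: u7_Pgen; apply: ltnW.
- by rewrite mcoeffC eqxx mulr1 subrr mulr0; apply: inR32_0.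
- rewrite mcoeffD rmorphD.
  rewrite (_ : _ * _ = u7 * (p - (p@_0)%:MP) + u7 * (q - (q@_0)%:MP)); last by ring.
  exact: inR32_add.
rewrite (rmorphM (mcoeff 0)) /= rmorphM.
rewrite (_ : _ * _ = u7 * (p - (p@_0)%:MP) * q + (p@_0)%:MP * (u7 * (q - (q@_0)%:MP)));
  last by ring.
by apply: inR32_add; apply: inR32_mul => //; apply: inR32_const.
Qed.

Lemma u7_homog : u7 \is 7.-homog.
Proof.
have hx : xv \is 1.-homog by rewrite dhomogX /= mdeg1.
have hy : yv \is 1.-homog by rewrite dhomogX /= mdeg1.
have homX (p : Cxy) n : p \is 1.-homog -> p ^+ n \is n.-homog.
  by move=> h; have := dhomogMn n h; rewrite mul1n.
apply: (@dhomogM _ _ _ 5 _ 2); last by apply: homX; rewrite rpredD.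
apply: (@dhomogM _ _ _ 2 _ 3); last by apply: homX; rewrite rpredB.
exact: (dhomogM hx hy).
Qed.

Local Open Scope Z_scope.
Definition u7_points : seq (Z * Z) := [:: (1, 0); (0, 1); (1, 1); (1, 2)].
Definition u7_certificate : seq Z := [:: -81; -504; -18; 2].
Local Close Scope Z_scope.

Definition u7Z (p : Z * Z) : Z := p.1 * p.2 * (p.1 - p.2) ^+ 3 * (p.1 + p.2) ^+ 2.

Lemma u7_certified :
  nonmember_certificate u7_points u7_certificate (basis_parts 7) (map u7Z u7_points).
Proof. by vm_compute. Qed.

Lemma u7_eval p : u7.@[ptZ p] = zC (u7Z p).
Proof.
rewrite /u7 /u7Z !(mevalXn, mevalM, mevalB, mevalD, mevalXU).
by rewrite !(rmorphXn, rmorphM, rmorphB, rmorphD).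
Qed.

Lemma u7_notin_R32 : ~ inR32 u7.
Proof.
move=> huu; have h7 : (7 <= 10)%N by [].
have := basis_spans h7 (conj huu u7_homog).
apply: (not_in_span_certificate u7_certified); first by rewrite size_map.
move=> j hj; rewrite (nth_map (0, 0)) //; exact: u7_eval.
Qed.

Lemma prime_chain_le (S : Cxy -> Prop) m n : (m <= n)%N -> prime_chain S n -> prime_chain S m.
Proof.
move=> hmn [Pc [hprime hstrict]]; exists Pc; split=> i hi.
  by apply: hprime; apply: leq_trans hmn.
by apply: hstrict; apply: leq_trans hmn.
Qed.

Lemma R32_not_cohen_macaulay : ~ cohen_macaulay inR32.
Proof.
move=> [n [[_ no_chain] [f [hirr [hreg not_unit]]]]].
have hn : (2 <= n)%N.
  by rewrite leqNgt; apply/negP => hn; apply/no_chain/(prime_chain_le hn)/R32_prime_chain2.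
have hf0 : f 0%N != 0.
  apply/eqP => f00; have [|r [_]] := hreg 0%N (ltnW hn) 1 inR32_1.
    by exists (fun=> 0); split=> [j|]; rewrite ?ltn0 // f00 mulr1 big_ord0.
  by rewrite big_ord0 => /eqP; rewrite oner_eq0.
have uf (i : nat) : (i < n)%N -> inR32 (u7 * f i).
  by move=> hi; have [hfi fi0] := hirr i hi; have := u7_mul_irrelevant hfi; rewrite fi0 subr0.
have [|r [hr]] := hreg 1%N hn (u7 * f 0%N) (uf _ (ltnW hn)).
  exists (fun=> u7 * f 1%N); split=> [j _|]; first exact: uf.
  by rewrite big_ord1 /=; ring.
rewrite big_ord1 /= mulrC => /(mulfI hf0) u7E.
by apply: u7_notin_R32; rewrite u7E; apply: hr.
Qed.

Lemma numer_coef_ext h h' n : (forall d, (d <= n)%N -> h d = h' d) ->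
  numer_coef h n = numer_coef h' n.
Proof. by move=> hh'; rewrite /numer_coef !hh' ?leq_subr. Qed.

Theorem proposition5p12 :
  (exists h : nat -> nat,
     (forall d, has_dim (R32_deg d) (h d)) /\
     [seq numer_coef h n | n <- iota 0 11] =
       ([:: 1; 0; 0; 0; 1; 1; 1; 0; 1; 1; 1] : seq int)) /\
  ~ cohen_macaulay inR32.
Proof.
split; last exact: R32_not_cohen_macaulay.
have dim_ex d : exists n, has_dim (R32_deg d) n.
  by apply: has_dim_exists => q; apply: R32_deg_in_span.
exists (fun d => proj1_sig (constructive_indefinite_description _ (dim_ex d))).
split=> [d|]; first exact: proj2_sig (constructive_indefinite_description _ (dim_ex d)).
rewrite (eq_in_map _ (numer_coef (fun d => size (basis_parts d))) (iota 0 11)).1.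
  by vm_compute.
move=> n; rewrite mem_iota add0n => hn; apply: numer_coef_ext => d hd.
apply: has_dim_unique (proj2_sig _) (has_dim_R32_deg _); lia.
Qed.
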